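(* Let $A\geq1$ and $\varepsilon>0$ be fixed. Let $a,c\in\mathbb{Z}\setminus\{0\}$, $b\in\mathbb{Z}$ and $x_1,x_2\geq1$ be such that $|c|<x_2^{A}$. Then $$\#\{n\in\mathbb{Z}\cap[-x_1,x_1]:\ \gcd(an+b,c)>x_2\}\ll \frac{x_1\gcd(a,c)}{x_2^{1-\varepsilon}}+\tau(c),$$ where the implied constant depends only on $A$ and $\varepsilon$.
   Context: $\tau(c)$ denotes the number of positive divisors of $c$. *)

From Stdlib Require Import Reals ZArith List Lia Lra.
Open Scope R_scope.

Definition Z_window (M : Z) : list Z :=
  map (fun k => (Z.of_nat k - M)%Z) (seq 0 (Z.to_nat (2 * M + 1))).

Definition tau (c : Z) : nat :=
  length (filter (fun d => Z.eqb (Z.rem c d) 0)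
                 (map Z.of_nat (seq 1 (Z.to_nat (Z.abs c))))).

Definition bad_count (a b c : Z) (x1 x2 : R) : nat :=
  length (filter (fun n =>
     if Rle_dec (Rabs (IZR n)) x1 then
       if Rlt_dec x2 (IZR (Z.gcd (a * n + b) c)) then true else false
     else false)
   (Z_window (Z.abs (up x1)))).

(* If gcd (a n + b) c > x2, then d := gcd (a n + b) c is a divisor of c with
   d > x2 and d | a n + b.  For a fixed d, the solutions n of d | a n + b form a
   single residue class modulo d / gcd (a, d), so at most
   4 x1 gcd (a, d) / d + 1 <= 4 x1 gcd (a, c) / x2 + 1 of them lie in [-x1, x1].
   Summing over the tau(c) divisors of c and using the divisor bound
   tau(c) << |c|^(eps/A) < x2^eps gives the claim.  The divisor bound comes from
   tau(n) / n^δ = prod_(p^e || n) (e + 1) / p^(eδ), where every factor is at most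
   1 once δ ln p >= 1, and bounded in terms of δ for the finitely many other p. *)

From Stdlib Require Import Reals ZArith.
Open Scope R_scope.
From Stdlib Require Import List Lia Lra.
From mathcomp Require Import ssreflect ssrfun ssrbool.
From mathcomp Require eqtype ssrnat seq path div prime bigop.

Module DivisorBound.
Import eqtype ssrnat seq path div prime bigop.

Definition prime_threshold (δ : R) : nat := Z.to_nat (up (exp (/ δ))).

Definition small_prime_factor (δ : R) : R := 1 + / (δ * ln 2).

Lemma ln2_gt0 : 0 < ln 2.
Proof. by have := ln_lt_2; lra. Qed.

Lemma small_prime_factor_ge1 δ : 0 < δ -> 1 <= small_prime_factor δ.
Proof.
move=> hδ; have hl := ln2_gt0.
suff : 0 < / (δ * ln 2) by rewrite /small_prime_factor; lra.
by apply: Rinv_0_lt_compat; nra.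
Qed.

Lemma INR_expn p e : INR (p ^ e) = INR p ^ e.
Proof. by elim: e => [|e IH] //; rewrite expnS -multE mult_INR IH. Qed.

Lemma succ_le_Rpower_pfactor δ p e : 0 < δ -> (2 <= p)%N ->
  INR e.+1 <=
  (if (p < prime_threshold δ)%N then small_prime_factor δ else 1) *
  Rpower (INR (p ^ e)) δ.
Proof.
move=> hδ hp.
have hp2 : 2 <= INR p by apply: (le_INR 2); apply/leP.
have hl2 := ln2_gt0.
have hlp : ln 2 <= ln (INR p).
  case: (Req_dec (INR p) 2) => [->|hne]; first lra.
  by apply/Rlt_le/ln_increasing; lra.
set t := δ * ln (INR p).
have ht : δ * ln 2 <= t by apply: Rmult_le_compat_l; lra.
have he : 0 <= INR e by apply: pos_INR.
have hexp : 1 + INR e * t <= Rpower (INR (p ^ e)) δ.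
  rewrite /Rpower INR_expn ln_pow; last lra.
  have -> : δ * (INR e * ln (INR p)) = INR e * t by rewrite /t; ring.
  exact: exp_ineq1_le.
rewrite S_INR; case: ifP => [_|hbig].
- rewrite /small_prime_factor.
  have hs : / (δ * ln 2) * (δ * ln 2) = 1 by field; lra.
  have hi : 0 < / (δ * ln 2) by apply: Rinv_0_lt_compat; nra.
  have : INR e <= / (δ * ln 2) * (INR e * t).
    have : / (δ * ln 2) * (INR e * (δ * ln 2)) = INR e by field; lra.
    have : INR e * (δ * ln 2) <= INR e * t by apply: Rmult_le_compat_l.
    nra.
  have : 0 <= INR e * t by apply: Rmult_le_pos; nra.
  nra.
- (* for large p, [δ ln p >= 1], so the linear bound [1 + e t] already suffices *)
  have hP : exp (/ δ) < INR p.
    have [hup _] := archimed (exp (/ δ)).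
    have hpos : (0 <= up (exp (/ δ)))%Z by apply: le_IZR; have := exp_pos (/ δ); lra.
    suff : IZR (up (exp (/ δ))) <= INR p by lra.
    rewrite -(Z2Nat.id _ hpos) -INR_IZR_INZ; apply: le_INR; apply/leP.
    by rewrite leqNgt hbig.
  have : 1 <= t.
    have : / δ < ln (INR p).
      by rewrite -[/ δ]ln_exp; apply: ln_increasing => //; apply: exp_pos.
    have : δ * / δ = 1 by field; lra.
    rewrite /t; nra.
  nra.
Qed.

Lemma prod_succ_le_Rpower δ (pd : seq (nat * nat)) : 0 < δ ->
  all prime (unzip1 pd) ->
  INR (\prod_(f <- pd) f.2.+1) <=
  small_prime_factor δ ^ count (fun f => f.1 < prime_threshold δ)%N pd *
  Rpower (INR (\prod_(f <- pd) f.1 ^ f.2)) δ.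
Proof.
move=> hδ; elim: pd => [|[p e] pd IH] /=.
  by rewrite !big_nil /Rpower /= ln_1 Rmult_0_r exp_0; lra.
case/andP=> pp hall; have {}IH := IH hall.
rewrite !big_cons -!multE !mult_INR [count _ _]/= -plusE pow_add.
have hpe : 0 < INR (p ^ e) by apply/lt_0_INR/ltP; rewrite expn_gt0 prime_gt0.
have hpd : 0 < INR (\prod_(f <- pd) f.1 ^ f.2).
  apply/lt_0_INR/ltP; rewrite big_seq prodn_cond_gt0 // => -[q k].
  by move=> /(map_f fst) /(allP hall) /prime_gt0 q0; rewrite expn_gt0 q0.
rewrite -Rpower_mult_distr //.
have -> : small_prime_factor δ ^ (p < prime_threshold δ)%N =
          (if (p < prime_threshold δ)%N then small_prime_factor δ else 1).
  by case: ifP => /=; lra.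
rewrite Rmult_assoc (Rmult_comm (_ ^ _)) -!Rmult_assoc Rmult_assoc.
apply: Rmult_le_compat; try exact: pos_INR.
- exact: succ_le_Rpower_pfactor (prime_gt1 pp).
- by rewrite Rmult_comm.
Qed.

Lemma size_divisors n : size (divisors n) = \prod_(f <- prime_decomp n) f.2.+1.
Proof.
rewrite /divisors; elim: (prime_decomp n) => [|[p e] pd IH] /=; first by rewrite big_nil.
rewrite big_cons /= -IH.
elim: e => [|e IHe]; first by rewrite mul1n.
by rewrite iterS size_merge size_cat size_map IHe [(e.+2 * _)%N]mulSn addnC.
Qed.

Lemma size_divisors_le_Rpower δ n : 0 < δ -> (0 < n)%N ->
  INR (size (divisors n)) <=
  small_prime_factor δ ^ prime_threshold δ * Rpower (INR n) δ.
Proof.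
move=> hδ hn.
have hall : all prime (unzip1 (prime_decomp n)).
  by apply/allP => p; rewrite -/(primes n) mem_primes => /andP[].
rewrite size_divisors {2}(prod_prime_decomp hn).
apply: (Rle_trans _ _ _ (prod_succ_le_Rpower _ _ hδ hall)).
apply: Rmult_le_compat_r; first exact/Rlt_le/exp_pos.
apply: Rle_pow; first exact: small_prime_factor_ge1.
(* the small primes of [n] are distinct elements of [iota 0 (prime_threshold δ)] *)
have -> : count (fun f => f.1 < prime_threshold δ)%N (prime_decomp n) =
          count (fun p => p < prime_threshold δ)%N (primes n) by rewrite count_map.
apply/leP; rewrite -size_filter -[X in (_ <= X)%N](size_iota 0).
apply: uniq_leq_size; first by rewrite filter_uniq // primes_uniq.
by move=> p; rewrite mem_filter mem_iota add0n => /andP[->].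
Qed.

Lemma rem_eq0_dvdn (c : Z) (k : nat) : (0 < k)%N ->
  Z.eqb (Z.rem c (Z.of_nat k)) 0 = (k %| Z.to_nat (Z.abs c))%N.
Proof.
move=> /ltP hk; have hk0 : Z.of_nat k <> 0%Z by lia.
apply/idP/idP.
- move/Z.eqb_eq/(Z.rem_divide _ _ hk0)/Z.divide_abs_r => -[z hz].
  have hz0 : (0 <= z)%Z by have := Z.abs_nonneg c; nia.
  apply/dvdnP; exists (Z.to_nat z); rewrite -multE; lia.
- case/dvdnP => z hz; apply/Z.eqb_eq/(Z.rem_divide _ _ hk0).
  apply/Z.divide_abs_r; exists (Z.of_nat z); rewrite -multE in hz; lia.
Qed.

Lemma List_seq_iota m n : List.seq m n = iota m n.
Proof. by elim: n m => //= n IH m; rewrite IH. Qed.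

Lemma tau_count c :
  tau c = count (fun k => k %| Z.to_nat (Z.abs c))%N (iota 1 (Z.to_nat (Z.abs c))).
Proof.
rewrite /tau List_seq_iota.
have : all (fun k => 0 < k)%N (iota 1 (Z.to_nat (Z.abs c))).
  by apply/allP => k; rewrite mem_iota => /andP[].
elim: (iota _ _) => //= k l IH /andP[hk /IH {}IH].
by rewrite rem_eq0_dvdn //; case: (_ %| _)%N; rewrite /= IH.
Qed.

Lemma tau_le_size_divisors c : (tau c <= size (divisors (Z.to_nat (Z.abs c))))%N.
Proof.
rewrite tau_count -size_filter; apply: uniq_leq_size; first exact/filter_uniq/iota_uniq.
move=> k; rewrite mem_filter mem_iota => /andP[hk /andP[hk1 hkn]].
by rewrite -dvdn_divisors // (leq_trans hk1 hkn).
Qed.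

Lemma tau_le_Rpower δ : 0 < δ ->
  exists C, 0 < C /\
    forall c, c <> 0%Z -> INR (tau c) <= C * Rpower (IZR (Z.abs c)) δ.
Proof.
move=> hδ; exists (small_prime_factor δ ^ prime_threshold δ); split.
  by apply: (Rlt_le_trans _ 1); [lra | exact/pow_R1_Rle/small_prime_factor_ge1].
move=> c hc; have hn : (0 < Z.to_nat (Z.abs c))%N by apply/ltP; lia.
have <- : INR (Z.to_nat (Z.abs c)) = IZR (Z.abs c).
  by rewrite INR_IZR_INZ Z2Nat.id //; apply: Z.abs_nonneg.
apply: (Rle_trans _ _ _ _ (size_divisors_le_Rpower _ _ hδ hn)).
exact/le_INR/leP/tau_le_size_divisors.
Qed.

End DivisorBound.

Lemma Z_window_In (M n : Z) : (0 <= M)%Z -> In n (Z_window M) <-> (-M <= n <= M)%Z.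
Proof.
move=> hM; rewrite /Z_window in_map_iff; split.
- by move=> [k [<- /in_seq hk]]; lia.
- by move=> hn; exists (Z.to_nat (n + M)); split; [lia | apply/in_seq; lia].
Qed.

Lemma Z_window_length (M : Z) : length (Z_window M) = Z.to_nat (2 * M + 1).
Proof. by rewrite /Z_window length_map length_seq. Qed.

Lemma Z_window_NoDup (M : Z) : NoDup (Z_window M).
Proof.
apply: NoDup_map_NoDup_ForallPairs; last exact: seq_NoDup.
by move=> x y _ _; lia.
Qed.

Lemma length_filter_le_impl {T} (f g : T -> bool) (l : list T) :
  (forall x, In x l -> f x = true -> g x = true) ->
  (length (filter f l) <= length (filter g l))%nat.
Proof.
elim: l => [|x l IH] //= H.
have {}IH := IH (fun y hy => H y (or_intror hy)).
case hf: (f x); case hg: (g x) => /=; try lia.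
by rewrite (H x (or_introl eq_refl) hf) in hg.
Qed.

Lemma length_filter_orb_le {T} (f g : T -> bool) (l : list T) :
  (length (filter (fun x => f x || g x) l) <=
   length (filter f l) + length (filter g l))%nat.
Proof. by elim: l => [|x l IH] //=; case: (f x); case: (g x) => /=; lia. Qed.

Lemma length_filter_existsb_le {T U} (P : U -> T -> bool) (D : list U)
    (l : list T) (K : R) :
  (forall d, In d D -> INR (length (filter (P d) l)) <= K) ->
  INR (length (filter (fun x => existsb (fun d => P d x) D) l)) <=
  INR (length D) * K.
Proof.
elim: D => [|d D IH] H; first by rewrite /= filter_false /=; lra.
have {}IH := IH (fun e he => H e (or_intror he)).
have hd := H d (or_introl eq_refl).
apply: (Rle_trans _ _ _ (le_INR _ _
  (length_filter_orb_le (P d) (fun x => existsb (fun e => P e x) D) l))).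
by rewrite [length (d :: D)]/= S_INR plus_INR; lra.
Qed.

Lemma Z_gcd_pos_r (a c : Z) : c <> 0%Z -> (0 < Z.gcd a c)%Z.
Proof.
move=> hc; have : Z.gcd a c <> 0%Z by move/Z.gcd_eq_0_r.
by have := Z.gcd_nonneg a c; lia.
Qed.

Lemma divide_sub_of_divide_linear (a b d n n' : Z) : d <> 0%Z ->
  (d | a * n + b)%Z -> (d | a * n' + b)%Z -> (d / Z.gcd a d | n - n')%Z.
Proof.
move=> hd hn hn'.
set g := Z.gcd a d.
have hg : g <> 0%Z by move/Z.gcd_eq_0_r.
have [m hm] : (g | d)%Z by apply: Z.gcd_divide_r.
have [a' ha] : (g | a)%Z by apply: Z.gcd_divide_l.
have hcop : Z.gcd m a' = 1%Z.
  have := Z.gcd_div_gcd d a g hg (Z.gcd_comm a d).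
  by rewrite {1}hm {1}ha !Z.div_mul.
rewrite hm Z.div_mul //; apply: (Z.gauss _ a') => //.
apply: (proj1 (Z.mul_divide_cancel_r _ _ g hg)).
have -> : (a' * (n - n') * g = (a * n + b) - (a * n' + b))%Z by rewrite ha; ring.
by rewrite -hm; apply: Z.divide_sub_r.
Qed.

Lemma length_le_of_congruent (l : list Z) (n0 m : Z) (y : R) :
  NoDup l -> (0 < m)%Z -> 0 <= y ->
  (forall n, In n l -> (m | n - n0)%Z /\ Rabs (IZR (n - n0)) <= y) ->
  INR (length l) <= 2 * (y / IZR m) + 1.
Proof.
move=> hl hm hy hmem.
have hmR : 0 < IZR m by apply: IZR_lt.
have hq : 0 <= y / IZR m by apply: Rle_mult_inv_pos.
(* [n |-> (n - n0) / m] injects [l] into the window [-N, N] *)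
set N := (up (y / IZR m) - 1)%Z.
have [hup1 hup2] := archimed (y / IZR m).
have hN : (0 <= N)%Z.
  have : (0 < up (y / IZR m))%Z by apply: lt_IZR; lra.
  by rewrite /N; lia.
set phi := fun n => ((n - n0) / m)%Z.
have hphi n : In n l -> (n - n0 = phi n * m)%Z.
  by case/hmem => -[k hk] _; rewrite /phi hk Z.div_mul //; lia.
have hinj : NoDup (map phi l).
  apply: NoDup_map_NoDup_ForallPairs hl => x y' hx hy'.
  by move: (hphi x hx) (hphi y' hy'); lia.
have hincl : incl (map phi l) (Z_window N).
  move=> j /in_map_iff [n [<- hn]]; apply/Z_window_In => //.
  have hb : IZR (Z.abs (phi n)) * IZR m <= y.
    rewrite -mult_IZR -(Z.abs_eq m); last lia.
    by rewrite -Z.abs_mul -(hphi n hn) abs_IZR; case: (hmem n hn).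
  have : IZR (Z.abs (phi n)) < IZR (up (y / IZR m)).
    apply: (Rle_lt_trans _ (y / IZR m)) => //.
    by apply/(Rmult_le_reg_r (IZR m)) => //; rewrite /Rdiv Rmult_assoc Rinv_l; lra.
  by move/lt_IZR; rewrite /N; lia.
rewrite -(length_map phi l).
apply: (Rle_trans _ _ _ (le_INR _ _ (NoDup_incl_length hinj hincl))).
rewrite Z_window_length INR_IZR_INZ Z2Nat.id; last lia.
by rewrite plus_IZR mult_IZR minus_IZR /=; lra.
Qed.

Definition dvd_linear_within (a b d : Z) (x : R) (n : Z) : bool :=
  if Rle_dec (Rabs (IZR n)) x then Z.eqb (Z.rem (a * n + b) d) 0 else false.

Lemma length_filter_dvd_linear_within (a b d : Z) (x : R) (l : list Z) :
  NoDup l -> (0 < d)%Z -> 0 <= x ->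
  INR (length (filter (dvd_linear_within a b d x) l)) <=
  4 * x * IZR (Z.gcd a d) / IZR d + 1.
Proof.
move=> hl hd hx; have hd0 : d <> 0%Z by lia.
set g := Z.gcd a d.
have [m hm] : (g | d)%Z by apply: Z.gcd_divide_r.
have hg : (0 < g)%Z by apply: Z_gcd_pos_r.
have hdg : (0 < d / g)%Z by rewrite hm Z.div_mul; nia.
have -> : 4 * x * IZR g / IZR d + 1 = 2 * (2 * x / IZR (d / g)) + 1.
  rewrite hm Z.div_mul ?mult_IZR; last lia.
  by field; split; apply: not_0_IZR; nia.
have hmem n : In n (filter (dvd_linear_within a b d x) l) ->
    Rabs (IZR n) <= x /\ (d | a * n + b)%Z.
  case/filter_In => _; rewrite /dvd_linear_within.
  case: Rle_dec => // hn /Z.eqb_eq hr; split=> //.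
  exact/(Z.rem_divide _ _ hd0).
move: (NoDup_filter (dvd_linear_within a b d x) hl) hmem.
case: (filter _ l) => [|n0 rest] hND hmem.
  have : 0 <= 2 * x / IZR (d / g) by apply: Rle_mult_inv_pos; [lra | exact: IZR_lt].
  by rewrite /=; lra.
apply: (length_le_of_congruent _ n0) => //; first lra.
move=> n hn; have [hn1 hn2] := hmem n hn; have [hn01 hn02] := hmem n0 (in_eq _ _).
split; first exact: (divide_sub_of_divide_linear _ _ _ _ _ hd0 hn2 hn02).
rewrite minus_IZR; apply: (Rle_trans _ _ _ (Rabs_triang _ _)); rewrite Rabs_Ropp; lra.
Qed.

Definition pos_divisors (c : Z) : list Z :=
  filter (fun d => Z.eqb (Z.rem c d) 0) (map Z.of_nat (seq 1 (Z.to_nat (Z.abs c)))).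

Lemma tau_pos_divisors c : tau c = length (pos_divisors c).
Proof. by []. Qed.

Lemma In_pos_divisors c d : c <> 0%Z ->
  In d (pos_divisors c) <-> (0 < d)%Z /\ (d | c)%Z.
Proof.
move=> hc; rewrite /pos_divisors filter_In in_map_iff; split.
- case=> -[k [<- /in_seq hk]] /Z.eqb_eq hr.
  have hk0 : Z.of_nat k <> 0%Z by lia.
  by split; [lia | apply/(Z.rem_divide _ _ hk0)].
- case=> hd hdc; have hd0 : d <> 0%Z by lia.
  split; last exact/Z.eqb_eq/(Z.rem_divide _ _ hd0).
  have : (d <= Z.abs c)%Z by apply: Z.divide_pos_le; [lia | apply/Z.divide_abs_r].
  by exists (Z.to_nat d); split; [lia | apply/in_seq; lia].
Qed.

Lemma bad_count_le_tau (a b c : Z) (x1 x2 : R) : c <> 0%Z -> 0 <= x1 -> 0 < x2 ->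
  INR (bad_count a b c x1 x2) <=
  INR (tau c) * (4 * x1 * IZR (Z.gcd a c) / x2 + 1).
Proof.
move=> hc hx1 hx2.
set P := fun d n => if Rlt_dec x2 (IZR d) then dvd_linear_within a b d x1 n else false.
(* a bad [n] is witnessed by the divisor [gcd (a n + b) c] of [c] *)
apply: (Rle_trans _ (INR (length (filter (fun n => existsb (fun d => P d n) (pos_divisors c))
                                         (Z_window (Z.abs (up x1))))))).
  apply: le_INR; rewrite /bad_count; apply: length_filter_le_impl => n _.
  case: Rle_dec => // hn; case: Rlt_dec => // hg _.
  have hg0 : (0 < Z.gcd (a * n + b) c)%Z by apply: lt_IZR; lra.
  apply/existsb_exists; exists (Z.gcd (a * n + b) c); split.
    by apply/In_pos_divisors => //; split=> //; apply: Z.gcd_divide_r.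
  rewrite /P /dvd_linear_within /=.
  destruct (Rlt_dec _ _) => //; destruct (Rle_dec _ _) => //.
  by apply/Z.eqb_eq/Z.rem_divide; [lia | apply: Z.gcd_divide_l].
rewrite tau_pos_divisors; apply: length_filter_existsb_le.
move=> d /(In_pos_divisors _ _ hc) [hd hdc].
have hK : 0 <= 4 * x1 * IZR (Z.gcd a c) / x2.
  apply: Rle_mult_inv_pos => //; apply: Rmult_le_pos; first lra.
  exact/IZR_le/Z.gcd_nonneg.
rewrite /P; case: Rlt_dec => hdx2; last by rewrite filter_false /=; lra.
apply: (Rle_trans _ _ _ (length_filter_dvd_linear_within _ _ _ _ _ (Z_window_NoDup _) hd hx1)).
have hgd : (0 < Z.gcd a d)%Z by apply: Z_gcd_pos_r; lia.
have hgdc : IZR (Z.gcd a d) <= IZR (Z.gcd a c).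
  apply/IZR_le/Z.divide_pos_le; first exact: Z_gcd_pos_r.
  apply: Z.gcd_greatest; first exact: Z.gcd_divide_l.
  exact: Z.divide_trans (Z.gcd_divide_r a d) hdc.
suff : 4 * x1 * IZR (Z.gcd a d) / IZR d <= 4 * x1 * IZR (Z.gcd a c) / x2 by lra.
apply: Rmult_le_compat.
- by apply: Rmult_le_pos; [lra | exact/IZR_le/Z.lt_le_incl].
- by apply/Rlt_le/Rinv_0_lt_compat; lra.
- by apply: Rmult_le_compat_l; lra.
- by apply: Rinv_le_contravar; lra.
Qed.

Lemma tau_le_Rpower_of_lt (A eps : R) : 0 < A -> 0 < eps ->
  exists C, 0 < C /\
    forall (c : Z) (x : R), c <> 0%Z -> 0 < x -> IZR (Z.abs c) < Rpower x A ->
      INR (tau c) <= C * Rpower x eps.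
Proof.
move=> hA heps; have hδ : 0 < eps / A by apply: Rdiv_lt_0_compat.
have [C [hC htau]] := DivisorBound.tau_le_Rpower _ hδ.
exists C; split=> // c x hc hx hcA.
apply: (Rle_trans _ _ _ (htau c hc)); apply: Rmult_le_compat_l; first lra.
have -> : Rpower x eps = Rpower (Rpower x A) (eps / A).
  by rewrite Rpower_mult; f_equal; field; lra.
apply: Rle_Rpower_l; first lra.
by split; [apply: IZR_lt; lia | lra].
Qed.

Theorem lemma2p3 :
  forall (A eps : R), 1 <= A -> 0 < eps ->
  exists K : R, 0 < K /\
    forall (a b c : Z) (x1 x2 : R),
      a <> 0%Z -> c <> 0%Z -> 1 <= x1 -> 1 <= x2 ->
      IZR (Z.abs c) < Rpower x2 A ->
      INR (bad_count a b c x1 x2) <=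
        K * (x1 * IZR (Z.gcd a c) / Rpower x2 (1 - eps) + INR (tau c)).
Proof.
move=> A eps hA heps.
have [C [hC htau]] := tau_le_Rpower_of_lt A eps ltac:(lra) heps.
exists (4 * C + 1); split; first lra.
move=> a b c x1 x2 _ hc hx1 hx2 hcA.
have htau_x2 := htau c x2 hc ltac:(lra) hcA.
have := bad_count_le_tau a b c x1 x2 hc ltac:(lra) ltac:(lra).
set y := x1 * IZR (Z.gcd a c) / Rpower x2 (1 - eps).
set u := 4 * x1 * IZR (Z.gcd a c) / x2.
have hy : 0 <= y.
  apply: Rle_mult_inv_pos; last exact: exp_pos.
  by apply: Rmult_le_pos; [lra | exact/IZR_le/Z.gcd_nonneg].
have hPe : 0 < Rpower x2 eps by apply: exp_pos.
have hu : u * Rpower x2 eps = 4 * y.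
  have hsplit : x2 = Rpower x2 (1 - eps) * Rpower x2 eps.
    by rewrite -Rpower_plus (_ : 1 - eps + eps = 1) ?Rpower_1; lra.
  rewrite /u /y {1}hsplit; field.
  by split; apply/Rgt_not_eq/exp_pos.
have hu0 : 0 <= u by apply: (Rmult_le_reg_r (Rpower x2 eps)); lra.
have := pos_INR (tau c); nra.
Qed.
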